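(* Let $q$ be a prime power with $q\equiv 1\pmod{52}$. Fix a primitive root $\alpha$ of $\mathbb{F}_q$ and set $\beta=\alpha^{(q-1)/13}$. Let $\chi$ be the quadratic residue character of $\mathbb{F}_q$. The following statements are equivalent: (i) $(q,13)$ gives a $3$-design; (ii) $(q,26)$ gives a $3$-design; (iii) the sequence $(\chi(1-\beta),\chi(1-\beta^2),\dots,\chi(1-\beta^6))$ is one of $\pm(1,1,-1,1,-1,-1)$, $\pm(1,1,-1,-1,-1,1)$, $\pm(1,-1,1,1,-1,-1)$, $\pm(1,-1,1,-1,-1,1)$.
   Context: Let $q$ be a power of an odd prime. The group $\mathrm{PSL}(2,q)$ acts on the projective line $\mathrm{PG}(1,q)=\mathbb{F}_q\cup\{\infty\}$ by linear fractional transformations $z\mapsto (az+b)/(cz+d)$, where $a,b,c,d\in\mathbb{F}_q$ with $ad-bc$ a nonzero square (matrices taken modulo $\pm I$). A $k$-subset $B$ of $\mathrm{PG}(1,q)$ is a starter of a $3$-design if the orbit $\{gB: g\in\mathrm{PSL}(2,q)\}$ is the block set of a $3$-$(q+1,k,\lambda)$ design for some positive integer $\lambda$. For $q\equiv1\pmod 4$ and a divisor $k$ of $q-1$, let $B$ be the unique subgroup of order $k$ of $\mathbb{F}_q^\times$; we say $(q,k)$ gives a $3$-design if $B$ is a starter of a $3$-design under $\mathrm{PSL}(2,q)$. The quadratic residue character $\chi:\mathbb{F}_q^\times\to\{\pm1\}$ is $\chi(a)=1$ if $a$ is a nonzero square and $\chi(a)=-1$ otherwise. *)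

From HB Require Import structures.
From mathcomp Require Import all_boot all_order all_algebra all_field.
Set Implicit Arguments. Unset Strict Implicit. Unset Printing Implicit Defensive.
Import GRing.Theory.
Local Open Scope ring_scope.

(* Projective line PG(1,q) over a finite field F: [option F], None = infinity. *)
Definition PG1 (F : finFieldType) := option F.

Definition nzsq (F : finFieldType) (x : F) : bool :=
  (x != 0) && [exists y : F, y ^+ 2 == x].

(* Quadratic residue character (with value -1 on non-squares; meant for x != 0). *)
Definition chi (F : finFieldType) (x : F) : int := if nzsq x then 1 else -1.

Definition mobius (F : finFieldType) (g : F * F * F * F) (z : option F) : option F :=
  let: (a, b, c, d) := g in
  match z with
  | Some x => if c * x + d == 0 then None else Some ((a * x + b) / (c * x + d))
  | None => if c == 0 then None else Some (a / c)
  end.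

Definition mdet (F : finFieldType) (g : F * F * F * F) : F :=
  let: (a, b, c, d) := g in a * d - b * c.

(* Elements of PSL(2,q), represented by matrices with ad - bc a nonzero square
   (the action factors through the quotient by +-I). *)
Definition PSL2 (F : finFieldType) : {set F * F * F * F} :=
  [set g | nzsq (mdet g)].

Definition psl_orbit (F : finFieldType) (B : {set option F}) : {set {set option F}} :=
  [set (mobius g) @: B | g in PSL2 F].

(* B is a starter of a 3-design: its orbit is the block set of a
   3-(q+1,|B|,lambda) design for some positive integer lambda. *)
Definition starter3 (F : finFieldType) (B : {set option F}) : Prop :=
  exists lambda : nat, (0 < lambda)%N /\
    forall T : {set option F}, #|T| = 3%N ->
      #|[set X in psl_orbit B | T \subset X]| = lambda.

Definition mu_sub (F : finFieldType) (k : nat) : {set option F} :=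
  [set Some x | x in [set x : F | (x != 0) && (x ^+ k == 1)]].

Definition gives_3design (F : finFieldType) (k : nat) : Prop :=
  starter3 (mu_sub F k).

(* For distinct points a, b, c of PG(1,q) put D(a,b,c) = [a,b][b,c][c,a], where [x,y] is the
   determinant of homogeneous coordinates of x and y.  A matrix g multiplies D by det(g)^3 times a
   square, so the square class of D is a PSL(2,q)-invariant of ordered triples; conversely any two
   triples of the same class are related by an element of PSL(2,q) (compose the matrices sending
   (oo, 0, 1) to each of them), and a diagonal matrix of non-square determinant exchanges the two
   classes.  Counting incidences between triples and blocks of the orbit of B, every triple lies
   in the same number of blocks iff B contains as many ordered triples of square class as of
   non-square class.
   For B the group of 13th or 26th roots of unity, write its elements as y = (-1)^e beta^r.  Since
   -1 and every y are squares, chi(y - y') only depends on chi(1 - beta^d) for d = 1..6 and on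
   chi(2), so both counts are determined by these seven signs; the 2^7 cases are evaluated. *)

From HB Require Import structures.
From mathcomp Require Import all_boot all_order all_algebra all_field.
From mathcomp Require Import cyclic ring zify.
Import GRing.Theory.
Set Implicit Arguments. Unset Strict Implicit. Unset Printing Implicit Defensive.
Local Open Scope ring_scope.

Section ProjectiveLine.
Variable F : finFieldType.
Implicit Types (g h : F * F * F * F) (w : F * F) (p : option F).

Definition hcoord p : F * F := if p is Some x then (x, 1) else (1, 0).
Definition hpoint w : option F := if w.2 == 0 then None else Some (w.1 / w.2).
Definition mx_act g w : F * F :=
  let: (a, b, c, d) := g in (a * w.1 + b * w.2, c * w.1 + d * w.2).
Definition mx_mul g h : F * F * F * F :=
  let: (a, b, c, d) := g in let: (a', b', c', d') := h in
  (a * a' + b * c', a * b' + b * d', c * a' + d * c', c * b' + d * d').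
Definition mx_adj g : F * F * F * F := let: (a, b, c, d) := g in (d, - b, - c, a).
Definition scalar_mx2 (l : F) : F * F * F * F := (l, 0, 0, l).
Definition vscale (l : F) w : F * F := (l * w.1, l * w.2).
Definition bracket w w' : F := w.1 * w'.2 - w.2 * w'.1.

Lemma hcoord_neq0 p : hcoord p != (0, 0).
Proof. by case: p => [x|]; rewrite /= xpair_eqE ?oner_eq0 ?andbF. Qed.

Lemma hpointK : cancel hcoord hpoint.
Proof. by case=> [x|]; rewrite /hpoint /= ?oner_eq0 ?eqxx ?divr1. Qed.

Lemma hpoint_scale l w : l != 0 -> hpoint (vscale l w) = hpoint w.
Proof.
case: w => u v l0; rewrite /hpoint /= mulf_eq0 (negbTE l0) /=.
by case: ifP => // /negbT v0; congr Some; field; rewrite l0 v0.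
Qed.

Lemma hcoord_hpoint w : w != (0, 0) -> exists2 l, l != 0 & hcoord (hpoint w) = vscale l w.
Proof.
case: w => u v nz; rewrite /hpoint /=; have [v0|v0] := eqVneq v 0.
  have u0 : u != 0 by apply: contraNneq nz => ->; rewrite v0.
  by exists u^-1; rewrite ?invr_eq0 // /vscale /= v0 mulr0 mulVf.
by exists v^-1; rewrite ?invr_eq0 // /vscale /= mulVf // mulrC.
Qed.

Lemma mobius_hpoint g w : w != (0, 0) -> mobius g (hpoint w) = hpoint (mx_act g w).
Proof.
case: g => [[[a b] c] d]; case: w => u v /= nz; rewrite /hpoint /=.
have [v0|v0] := eqVneq v 0.
  have u0 : u != 0 by apply: contraNneq nz => ->; rewrite v0.
  rewrite v0 !mulr0 !addr0 mulf_eq0 (negbTE u0) orbF.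
  by case: ifP => // /negbT c0; congr Some; field; rewrite c0 u0.
have -> : c * (u / v) + d = (c * u + d * v) / v by field.
rewrite mulf_eq0 invr_eq0 (negbTE v0) orbF.
by case: ifP => // /negbT cd0; congr Some; field; rewrite cd0 v0.
Qed.

Lemma mx_act_mul g h w : mx_act (mx_mul g h) w = mx_act g (mx_act h w).
Proof.
case: g => [[[a b] c] d]; case: h => [[[a' b'] c'] d']; case: w => u v /=.
by congr pair; ring.
Qed.

Lemma mx_act_scalar l w : mx_act (scalar_mx2 l) w = vscale l w.
Proof. by case: w => u v; congr pair; rewrite /=; ring. Qed.

Lemma mdet_mul g h : mdet (mx_mul g h) = mdet g * mdet h.
Proof. by case: g => [[[a b] c] d]; case: h => [[[a' b'] c'] d'] /=; ring. Qed.

Lemma mdet_adj g : mdet (mx_adj g) = mdet g.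
Proof. by case: g => [[[a b] c] d] /=; ring. Qed.

Lemma mul_adj_mx g : mx_mul (mx_adj g) g = scalar_mx2 (mdet g).
Proof. by case: g => [[[a b] c] d]; congr (_, _, _, _); rewrite /=; ring. Qed.

Lemma bracket_act g w w' : bracket (mx_act g w) (mx_act g w') = mdet g * bracket w w'.
Proof.
by case: g => [[[a b] c] d]; case: w => u v; case: w' => u' v'; rewrite /bracket /=; ring.
Qed.

Lemma bracket_scale l l' w w' : bracket (vscale l w) (vscale l' w') = l * l' * bracket w w'.
Proof. by case: w => u v; case: w' => u' v'; rewrite /bracket /vscale /=; ring. Qed.

Lemma bracket_hcoord_neq0 p p' : p != p' -> bracket (hcoord p) (hcoord p') != 0.
Proof.
case: p => [x|]; case: p' => [y|] //=; rewrite /bracket /= ?mulr1 ?mul1r ?mulr0 ?mul0r.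
- by rewrite subr_eq0; apply: contraNneq => ->.
- by rewrite sub0r oppr_eq0 oner_eq0.
- by rewrite subr0 oner_eq0.
Qed.

Lemma mx_act_neq0 g w : mdet g != 0 -> w != (0, 0) -> mx_act g w != (0, 0).
Proof.
move=> g0; apply: contraNneq => gw0.
have : vscale (mdet g) w = (0, 0).
  rewrite -mx_act_scalar -mul_adj_mx mx_act_mul gw0.
  by case: (mx_adj g) => [[[a b] c] d] /=; rewrite !mulr0 addr0.
by case: w {gw0} => u v [/eqP + /eqP]; rewrite !mulf_eq0 (negbTE g0) /= => /eqP -> /eqP ->.
Qed.

Lemma mobiusE g p : mobius g p = hpoint (mx_act g (hcoord p)).
Proof. by rewrite -{1}(hpointK p) mobius_hpoint // hcoord_neq0. Qed.

Lemma hcoord_mobius g p : mdet g != 0 ->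
  exists2 l, l != 0 & hcoord (mobius g p) = vscale l (mx_act g (hcoord p)).
Proof. by move=> g0; rewrite mobiusE; apply/hcoord_hpoint/mx_act_neq0/hcoord_neq0. Qed.

Lemma mobius_mul g h p : mdet h != 0 -> mobius (mx_mul g h) p = mobius g (mobius h p).
Proof.
move=> h0; rewrite [mobius h p]mobiusE mobius_hpoint ?mobiusE ?mx_act_mul //.
exact/mx_act_neq0/hcoord_neq0.
Qed.

Lemma mobius_scalar l p : l != 0 -> mobius (scalar_mx2 l) p = p.
Proof. by move=> l0; rewrite mobiusE mx_act_scalar hpoint_scale // hpointK. Qed.

Lemma mobius_inj g : mdet g != 0 -> injective (mobius g).
Proof.
move=> g0; apply: (can_inj (g := mobius (mx_adj g))) => p.
by rewrite -mobius_mul // mul_adj_mx mobius_scalar.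
Qed.

End ProjectiveLine.

Lemma expf_card_pred (F : finFieldType) (x : F) : x != 0 -> x ^+ #|F|.-1 = 1.
Proof.
move=> x0; apply: (mulfI x0); rewrite -exprS prednK ?(ltnW (finNzRing_gt1 _)) // mulr1.
exact: expf_card.
Qed.

Lemma finField_prim_root (F : finFieldType) : exists alpha : F, (#|F|.-1).-primitive_root alpha.
Proof.
have q1_gt0 : (0 < #|F|.-1)%N by rewrite -subn1 subn_gt0 finNzRing_gt1.
have /hasP [alpha _ alpha_prim] : has (#|F|.-1).-primitive_root (enum (predC1 (0 : F))).
  apply: has_prim_root; rewrite ?enum_uniq // -?cardE ?cardC1 //.
  by apply/allP => x; rewrite mem_enum unity_rootE => /expf_card_pred ->.
by exists alpha.
Qed.

Section QuadraticResidues.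
Variables (F : finFieldType) (alpha : F).
Hypothesis alpha_prim : (#|F|.-1).-primitive_root alpha.

Lemma prim_root_neq0 : alpha != 0.
Proof.
apply: contra_eq_neq (prim_expr_order alpha_prim) => ->.
by rewrite expr0n eqn0Ngt (prim_order_gt0 alpha_prim) eq_sym oner_eq0.
Qed.

Lemma prim_root_log (x : F) : x != 0 -> exists i, x = alpha ^+ i.
Proof. by move/expf_card_pred/(prim_rootP alpha_prim) => [i ->]; exists i. Qed.

Hypothesis F_odd : odd #|F|.

Lemma nzsq_prim_root_exp i : nzsq (alpha ^+ i) = ~~ odd i.
Proof.
have q1_even : ~~ odd #|F|.-1.
  by move: F_odd (prim_order_gt0 alpha_prim); case: #|F| => //= n; rewrite negbK.
apply/idP/idP => [/andP [_ /existsP [y /eqP y2]] | i_even].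
  have y0 : y != 0.
    by apply: contra_eq_neq y2 => ->; rewrite expr0n eq_sym expf_neq0 ?prim_root_neq0.
  have [j yj] := prim_root_log y0; move: y2; rewrite yj -exprM => /eqP.
  rewrite (eq_prim_root_expr alpha_prim) => /eqP /(congr1 odd).
  by rewrite !odd_mod ?(negbTE q1_even) // oddM andbF => <-.
rewrite /nzsq expf_neq0 ?prim_root_neq0 //=; apply/existsP; exists (alpha ^+ i./2).
by rewrite -exprM muln2 -{2}(odd_double_half i) (negbTE i_even).
Qed.

End QuadraticResidues.

Lemma nzsqM (F : finFieldType) (x y : F) : odd #|F| -> x != 0 -> y != 0 ->
  nzsq (x * y) = (nzsq x == nzsq y).
Proof.
move=> F_odd x0 y0; have [alpha alpha_prim] := finField_prim_root F.
have [i ->] := prim_root_log alpha_prim x0; have [j ->] := prim_root_log alpha_prim y0.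
by rewrite -exprD !nzsq_prim_root_exp // oddD; case: (odd i); case: (odd j).
Qed.

Lemma nzsq_sqr (F : finFieldType) (a : F) : a != 0 -> nzsq (a ^+ 2).
Proof. by move=> a0; rewrite /nzsq expf_neq0 //=; apply/existsP; exists a. Qed.

Lemma nzsq_mul_sqr (F : finFieldType) (a y : F) : odd #|F| -> a != 0 -> y != 0 ->
  nzsq (a ^+ 2 * y) = nzsq y.
Proof. by move=> F_odd a0 y0; rewrite nzsqM ?expf_neq0 // nzsq_sqr //; case: (nzsq y). Qed.

Lemma nonsquare_exists (F : finFieldType) : odd #|F| -> exists2 n0 : F, n0 != 0 & ~~ nzsq n0.
Proof.
move=> F_odd; have [alpha alpha_prim] := finField_prim_root F.
by exists alpha; rewrite ?prim_root_neq0 // -[alpha]expr1 nzsq_prim_root_exp.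
Qed.

Section TripleSign.
Variable F : finFieldType.
Hypothesis F_odd : odd #|F|.
Implicit Types (g : F * F * F * F) (p : option F * option F * option F).

Definition triple_disc p : F := let: (a, b, c) := p in
  bracket (hcoord a) (hcoord b) * bracket (hcoord b) (hcoord c) * bracket (hcoord c) (hcoord a).
Definition distinct3 p := let: (a, b, c) := p in [&& a != b, b != c & a != c].
Definition tsign p := nzsq (triple_disc p).
Definition mobius3 g p := let: (a, b, c) := p in (mobius g a, mobius g b, mobius g c).

Lemma triple_disc_neq0 p : distinct3 p -> triple_disc p != 0.
Proof.
by case: p => [[a b] c] /and3P [ab bc ac]; rewrite !mulf_neq0 // bracket_hcoord_neq0 // eq_sym.
Qed.

Lemma triple_disc_mobius3 g p : mdet g != 0 ->
  exists2 l, l != 0 & triple_disc (mobius3 g p) = l ^+ 2 * (mdet g ^+ 2 * (mdet g * triple_disc p)).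
Proof.
case: p => [[a b] c] g0 /=.
have [la la0 ->] := hcoord_mobius a g0; have [lb lb0 ->] := hcoord_mobius b g0.
have [lc lc0 ->] := hcoord_mobius c g0.
by exists (la * lb * lc); rewrite ?mulf_neq0 // !bracket_scale !bracket_act; ring.
Qed.

Lemma tsign_mobius3 g p : mdet g != 0 -> distinct3 p ->
  tsign (mobius3 g p) = (nzsq (mdet g) == tsign p).
Proof.
move=> g0 /triple_disc_neq0 p0; rewrite /tsign.
have [l l0 ->] := triple_disc_mobius3 p g0.
by rewrite !nzsq_mul_sqr ?nzsqM ?mulf_neq0 ?expf_neq0.
Qed.

Lemma distinct3_mobius3 g p : mdet g != 0 -> distinct3 (mobius3 g p) = distinct3 p.
Proof. by case: p => [[a b] c] g0 /=; rewrite !(inj_eq (mobius_inj g0)). Qed.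

Lemma mobius3_inj g : mdet g != 0 -> injective (mobius3 g).
Proof.
move/mobius_inj => g_inj.
by case=> [[a b] c] [[a' b'] c'] [/g_inj -> /g_inj -> /g_inj ->].
Qed.

(* The columns of [frame_mx (a, b, c)] represent [a] and [b], scaled so that their sum
   represents [c]. *)
Definition frame_mx p : F * F * F * F := let: (a, b, c) := p in
  let: (u1, v1) := hcoord a in let: (u2, v2) := hcoord b in
  let k1 := bracket (hcoord c) (hcoord b) in let k2 := bracket (hcoord a) (hcoord c) in
  (k1 * u1, k2 * u2, k1 * v1, k2 * v2).

Lemma mdet_frame_mx p : mdet (frame_mx p) = triple_disc p.
Proof.
case: p => [[a b] c] /=.
by case: (hcoord a) (hcoord b) (hcoord c) => [u1 v1] [u2 v2] [u3 v3]; rewrite /bracket /=; ring.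
Qed.

Lemma mdet_frame_mx_neq0 p : distinct3 p -> mdet (frame_mx p) != 0.
Proof. by rewrite mdet_frame_mx; apply: triple_disc_neq0. Qed.

Lemma mobius3_mul g h p : mdet h != 0 -> mobius3 (mx_mul g h) p = mobius3 g (mobius3 h p).
Proof. by case: p => [[a b] c] h0 /=; rewrite !mobius_mul. Qed.

Lemma mobius3_adjK g p : mdet g != 0 -> mobius3 (mx_adj g) (mobius3 g p) = p.
Proof.
move=> g0; rewrite -mobius3_mul // mul_adj_mx.
by case: p => [[a b] c]; rewrite /mobius3 !mobius_scalar.
Qed.

Definition frame3 : option F * option F * option F := (None, Some 0, Some 1).

Lemma frame_mx_act a b c : let M := frame_mx (a, b, c) in
  [/\ mx_act M (hcoord None) = vscale (bracket (hcoord c) (hcoord b)) (hcoord a),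
      mx_act M (hcoord (Some 0)) = vscale (bracket (hcoord a) (hcoord c)) (hcoord b) &
      mx_act M (hcoord (Some 1)) = vscale (bracket (hcoord a) (hcoord b)) (hcoord c)].
Proof.
rewrite /frame_mx; case: (hcoord a) (hcoord b) (hcoord c) => [u1 v1] [u2 v2] [u3 v3].
by split; congr pair; rewrite /bracket /=; ring.
Qed.

Lemma mobius3_frame_mx p : distinct3 p -> mobius3 (frame_mx p) frame3 = p.
Proof.
case: p => [[a b] c] /and3P [ab bc ac]; rewrite /mobius3 /frame3 !mobiusE.
have [-> -> ->] := frame_mx_act a b c.
by rewrite !hpoint_scale ?hpointK // bracket_hcoord_neq0 // eq_sym.
Qed.

Lemma mobius3_transitive p p' : distinct3 p -> distinct3 p' -> tsign p = tsign p' ->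
  exists2 g, g \in PSL2 F & mobius3 g p = p'.
Proof.
move=> p_dis p'_dis p_p'; exists (mx_mul (frame_mx p') (mx_adj (frame_mx p))).
  rewrite inE mdet_mul mdet_adj !mdet_frame_mx nzsqM ?triple_disc_neq0 //.
  by move: p_p'; rewrite /tsign => ->.
have p_frame3 : mobius3 (mx_adj (frame_mx p)) p = frame3.
  by rewrite -{2}(mobius3_frame_mx p_dis) mobius3_adjK ?mdet_frame_mx_neq0.
by rewrite mobius3_mul ?mdet_adj ?mdet_frame_mx_neq0 // p_frame3 mobius3_frame_mx.
Qed.

End TripleSign.

Lemma card_sep_sum (T : finType) (A : {set T}) (P : pred T) :
  #|[set x in A | P x]| = (\sum_(x in A) P x)%N.
Proof.
rewrite -sum1_card [LHS]big_mkcond [RHS]big_mkcond /=.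
by apply: eq_bigr => x _; rewrite inE; case: (x \in A); case: (P x).
Qed.

Section OrbitCounting.
Variable F : finFieldType.
Hypothesis F_odd : odd #|F|.
Variable B : {set option F}.
Implicit Types (g h : F * F * F * F) (p : option F * option F * option F) (X : {set option F}).

Local Notation orbit := (psl_orbit B).

Definition triple_in p X := let: (a, b, c) := p in [&& a \in X, b \in X & c \in X].
Definition triple_set p : {set option F} := let: (a, b, c) := p in a |: (b |: [set c]).
Definition nblocks p := #|[set X in orbit | triple_in p X]|.
Definition triples_with b :=
  [set p : option F * option F * option F | distinct3 p && (tsign p == b)].
Definition ntriples_in b X := #|[set p in triples_with b | triple_in p X]|.

Lemma PSL2_nzsq g : g \in PSL2 F -> nzsq (mdet g).
Proof. by rewrite inE. Qed.

Lemma PSL2_mdet g : g \in PSL2 F -> mdet g != 0.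
Proof. by case/PSL2_nzsq/andP. Qed.

Lemma PSL2_mul g h : g \in PSL2 F -> h \in PSL2 F -> mx_mul g h \in PSL2 F.
Proof.
by move=> gP hP; rewrite inE mdet_mul nzsqM ?PSL2_mdet // !PSL2_nzsq.
Qed.

Lemma mobius_set_inj g : g \in PSL2 F -> injective (fun X : {set option F} => mobius g @: X).
Proof. by move/PSL2_mdet/mobius_inj/imset_inj. Qed.

Lemma psl_orbit_mobius g : g \in PSL2 F ->
  [set mobius g @: X | X : {set option F} in orbit] = orbit.
Proof.
move=> gP; apply/eqP; rewrite eqEcard (card_imset _ (mobius_set_inj gP)) leqnn andbT.
apply/subsetP => _ /imsetP [_ /imsetP [h hP ->] ->]; apply/imsetP.
exists (mx_mul g h); first exact: PSL2_mul.
by rewrite -imset_comp; apply: eq_imset => x /=; rewrite mobius_mul ?PSL2_mdet.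
Qed.

Lemma triple_in_mobius3 g p X : g \in PSL2 F ->
  triple_in (mobius3 g p) (mobius g @: X) = triple_in p X.
Proof.
move/PSL2_mdet/mobius_inj => g_inj.
by case: p => [[a b] c] /=; rewrite !mem_imset.
Qed.

Lemma nblocks_mobius3 g p : g \in PSL2 F -> nblocks (mobius3 g p) = nblocks p.
Proof.
move=> gP; rewrite /nblocks -[RHS](card_imset _ (mobius_set_inj gP)); apply: eq_card => Y.
rewrite [LHS]inE -{1}(psl_orbit_mobius gP); apply/idP/imsetP => [/andP [] | [X]].
  by case/imsetP=> X XO ->; rewrite triple_in_mobius3 // => pX; exists X; rewrite // inE XO.
rewrite inE => /andP [XO pX] ->.
by rewrite triple_in_mobius3 // pX imset_f.
Qed.

Lemma triples_with_mobius3 g b p : g \in PSL2 F ->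
  (mobius3 g p \in triples_with b) = (p \in triples_with b).
Proof.
move=> gP; rewrite !inE distinct3_mobius3 ?PSL2_mdet //.
by case p_dis: (distinct3 p) => //=; rewrite tsign_mobius3 ?PSL2_mdet ?PSL2_nzsq.
Qed.

Lemma ntriples_in_mobius g b X : g \in PSL2 F -> ntriples_in b (mobius g @: X) = ntriples_in b X.
Proof.
move=> gP; have g_inj := mobius3_inj (PSL2_mdet gP).
rewrite /ntriples_in -[RHS](card_imset _ g_inj); apply: eq_card => -[[a b'] c].
rewrite [LHS]inE; apply/idP/imsetP => [/andP [abc_b /and3P []] | [p]].
  move=> /imsetP [a1 a1X Ea] /imsetP [b1 b1X Eb] /imsetP [c1 c1X Ec]; subst a b' c.
  by exists (a1, b1, c1); rewrite // inE -(triples_with_mobius3 _ _ gP) /= abc_b a1X b1X c1X.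
by rewrite inE => /andP [p_b pX] ->; rewrite triples_with_mobius3 // triple_in_mobius3 ?p_b.
Qed.

Lemma card_triples_with_negb b : #|triples_with (~~ b)| = #|triples_with b|.
Proof.
have [n0 n0_neq0 n0_nsq] := nonsquare_exists F_odd.
pose sigma : F * F * F * F := (n0, 0, 0, 1).
have sigma0 : mdet sigma = n0 by rewrite /= mulr1 mulr0 subr0.
have sigma_neq0 : mdet sigma != 0 by rewrite sigma0.
have le_card b' : (#|triples_with b'| <= #|triples_with (~~ b')|)%N.
  rewrite -(card_imset _ (mobius3_inj sigma_neq0)); apply/subset_leq_card/subsetP.
  move=> _ /imsetP [p + ->]; rewrite !inE distinct3_mobius3 // => /andP [p_dis /eqP p_b'].
  by rewrite p_dis tsign_mobius3 // sigma0 (negbTE n0_nsq) p_b'; case: b' {p_b'}.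
by apply/eqP; rewrite eqn_leq le_card -{2}[b]negbK le_card.
Qed.

Lemma frame3_triples_with : frame3 F \in triples_with true.
Proof.
rewrite inE /= (inj_eq Some_inj) eq_sym oner_eq0 eqb_id /tsign.
have -> : triple_disc (frame3 F) = 1 ^+ 2 by rewrite /triple_disc /bracket /=; ring.
exact/nzsq_sqr/oner_neq0.
Qed.

Lemma card_triples_with_gt0 b : (0 < #|triples_with b|)%N.
Proof.
have t_gt0 : (0 < #|triples_with true|)%N.
  by apply/card_gt0P; exists (frame3 F); exact: frame3_triples_with.
by case: b => //; rewrite -[false]/(~~ true) card_triples_with_negb.
Qed.

Lemma psl_orbit_gt0 : (0 < #|orbit|)%N.
Proof.
apply/card_gt0P; exists B; apply/imsetP; exists (scalar_mx2 (1 : F)).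
  by rewrite inE /= mulr0 subr0 -expr2 nzsq_sqr ?oner_neq0.
by rewrite -[LHS]imset_id; apply: eq_imset => x; rewrite mobius_scalar ?oner_eq0.
Qed.

Lemma nblocks_tsign p p' : distinct3 p -> distinct3 p' -> tsign p = tsign p' ->
  nblocks p = nblocks p'.
Proof.
move=> p_dis p'_dis /(mobius3_transitive F_odd p_dis p'_dis) [g gP <-].
by rewrite nblocks_mobius3.
Qed.

Lemma sum_nblocks b : (\sum_(p in triples_with b) nblocks p = #|orbit| * ntriples_in b B)%N.
Proof.
under eq_bigr => p _ do rewrite /nblocks card_sep_sum.
rewrite exchange_big /= -sum_nat_const; apply: eq_bigr => _ /imsetP [g gP ->].
by rewrite -card_sep_sum -/(ntriples_in b _) ntriples_in_mobius.
Qed.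

Lemma card_mul_nblocks b p : p \in triples_with b ->
  (#|triples_with b| * nblocks p = #|orbit| * ntriples_in b B)%N.
Proof.
rewrite inE => /andP [p_dis /eqP p_b]; rewrite -sum_nblocks -sum_nat_const.
apply: eq_bigr => p'; rewrite inE => /andP [p'_dis /eqP p'_b].
by apply: nblocks_tsign; rewrite ?p_b.
Qed.

Lemma sub_triple_set p X : (triple_set p \subset X) = triple_in p X.
Proof. by case: p => [[a b] c]; rewrite /= !subUset !sub1set andbA. Qed.

Lemma card_triple_set p : distinct3 p -> #|triple_set p| = 3%N.
Proof.
by case: p => [[a b] c] /and3P [ab bc ac]; rewrite /= !cardsU1 cards1 !inE negb_or ab ac bc.
Qed.

Lemma card3_triple_set (T : {set option F}) :
  #|T| = 3%N -> exists2 p, distinct3 p & T = triple_set p.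
Proof.
rewrite cardE; have := enum_uniq (mem T).
case T_enum: (enum T) => [|a [|b [|c [|d s]]]] //= + _.
rewrite !inE !negb_or andbT => /andP [/andP [ab ac] bc].
exists (a, b, c); first by rewrite /= ab bc ac.
by apply/setP => x; rewrite -mem_enum T_enum !inE.
Qed.

Lemma nblocks_triple_set p : nblocks p = #|[set X in orbit | triple_set p \subset X]|.
Proof. by apply: eq_card => X; rewrite !inE sub_triple_set. Qed.

Theorem starter3_balanced : (exists p, distinct3 p && triple_in p B) ->
  starter3 B <-> ntriples_in true B = ntriples_in false B.
Proof.
case=> p0 /andP [p0_dis p0B].
have [pt pt_in] : exists p, p \in triples_with true by apply/card_gt0P/card_triples_with_gt0.
have [pf pf_in] : exists p, p \in triples_with false by apply/card_gt0P/card_triples_with_gt0.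
have mul_t := card_mul_nblocks pt_in; have mul_f := card_mul_nblocks pf_in.
rewrite (card_triples_with_negb true) in mul_f.
have nblocksE p : distinct3 p -> nblocks p = if tsign p then nblocks pt else nblocks pf.
  move: pt_in pf_in; rewrite !inE => /andP [? /eqP tpt] /andP [? /eqP tpf] p_dis.
  by case: ifP => tp; apply: nblocks_tsign; rewrite ?tpt ?tpf ?tp.
split=> [[lam [_ lamE]] | balanced].
  have lamP p : distinct3 p -> nblocks p = lam.
    by move=> p_dis; rewrite nblocks_triple_set lamE ?card_triple_set.
  move: pt_in pf_in; rewrite !inE => /andP [pt_dis _] /andP [pf_dis _].
  by apply/eqP; rewrite -(eqn_pmul2l psl_orbit_gt0) -mul_t -mul_f !lamP.
have nblocks_tf : nblocks pt = nblocks pf.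
  by apply/eqP; rewrite -(eqn_pmul2l (card_triples_with_gt0 true)) mul_t mul_f balanced.
exists (nblocks pt); split=> [|T /card3_triple_set [p p_dis ->]]; last first.
  by rewrite -nblocks_triple_set nblocksE // -nblocks_tf; case: (tsign p).
have p0_in : p0 \in triples_with (tsign p0) by rewrite inE p0_dis eqxx.
have := card_mul_nblocks p0_in; rewrite nblocksE // -nblocks_tf if_same.
have : (0 < #|orbit| * ntriples_in (tsign p0) B)%N.
  by rewrite muln_gt0 psl_orbit_gt0; apply/card_gt0P; exists p0; rewrite inE p0_in.
by move=> /[swap] <-; rewrite muln_gt0 => /andP [].
Qed.

End OrbitCounting.

Lemma sumn_iota n (f : nat -> nat) : sumn [seq f i | i <- iota 0 n] = (\sum_(i < n) f i)%N.
Proof. by rewrite sumnE big_map -(big_mkord xpredT) /index_iota subn0. Qed.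

Lemma sum3_iota n (f : nat -> nat -> nat -> nat) :
  (\sum_(a < n) \sum_(b < n) \sum_(c < n) f a b c)%N =
  sumn [seq sumn [seq sumn [seq f a b c | c <- iota 0 n] | b <- iota 0 n] | a <- iota 0 n].
Proof.
rewrite sumn_iota; apply: eq_bigr => a _; rewrite sumn_iota; apply: eq_bigr => b _.
by rewrite sumn_iota.
Qed.

(* Encoding: [bs] stands for the signs chi(1 - beta^d), d = 1..6, [c2] for chi(2), and i < 26
   for y_i = (-1)^(i / 13) beta^(i mod 13).  The signs for 6 < d < 13 follow from
   1 - beta^d = (- beta^d) (1 - beta^(13 - d)), those of 1 + beta^d from
   1 - beta^(2 d) = (1 - beta^d) (1 + beta^d), and [sq_diff i j] is the sign of y_i - y_j, as
   y_j = y_i (-1)^e beta^d with e = i / 13 + j / 13 and d = j - i mod 13. *)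
Section SignPatterns.
Local Open Scope nat_scope.
Variables (bs : seq bool) (c2 : bool).

Definition sq_one_sub d := nth false bs (if d <= 6 then d.-1 else (13 - d).-1).
Definition sq_one_sub_signed e d :=
  if ~~ odd e then sq_one_sub d
  else if d == 0 then c2 else sq_one_sub (2 * d %% 13) == sq_one_sub d.
Definition sq_diff i j :=
  sq_one_sub_signed (i %/ 13 + j %/ 13) ((j %% 13 + 13 - i %% 13) %% 13).
Definition sq_triple a b c := sq_diff a b == (sq_diff b c == sq_diff a c).

Definition ntriples n t :=
  \sum_(a < n) \sum_(b < n) \sum_(c < n) [&& a != b :> nat, b != c :> nat, a != c :> nat &
                                             sq_triple a b c == t].
Definition balanced n := ntriples n true == ntriples n false.

Definition sign_table n : seq (seq (option bool)) :=
  [seq [seq if i == j then None else Some (sq_diff i j) | j <- iota 0 n] | i <- iota 0 n].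

End SignPatterns.

Definition ndistinct n :=
  (\sum_(a < n) \sum_(b < n) \sum_(c < n) [&& a != b :> nat, b != c :> nat & a != c :> nat])%N.

Lemma ndistinct_iota n : ndistinct n =
  sumn [seq sumn [seq sumn [seq [&& a != b, b != c & a != c] : nat
    | c <- iota 0 n] | b <- iota 0 n] | a <- iota 0 n].
Proof. exact: (sum3_iota n (fun a b c => [&& a != b, b != c & a != c] : nat)). Qed.

Lemma ndistinct13 : ndistinct 13 = (13 * 12 * 11)%N.
Proof. by rewrite ndistinct_iota; vm_compute. Qed.

Lemma ndistinct26 : ndistinct 26 = (26 * 25 * 24)%N.
Proof. by rewrite ndistinct_iota; vm_compute. Qed.

Lemma ntriples_sum bs c2 n : (ntriples bs c2 n true + ntriples bs c2 n false)%N = ndistinct n.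
Proof.
rewrite -!big_split; apply: eq_bigr => a _; rewrite -!big_split; apply: eq_bigr => b _.
rewrite -!big_split; apply: eq_bigr => c _.
by case: (_ != _) (_ != _) (_ != _) (sq_triple _ _ _ _ _) => [] [] [] [].
Qed.

Definition triple_sign (x y z : option bool) : option bool :=
  if (x, y, z) is (Some u, Some v, Some w) then Some (u == (v == w)) else None.

(* Walking along the rows of the table avoids indexed lookups, which keeps the evaluation fast. *)
Definition ntriples_table (T : seq (seq (option bool))) : nat :=
  sumn [seq sumn [seq sumn [seq triple_sign rb_ab.2 bc_ac.1 bc_ac.2 == Some true : nat
                          | bc_ac <- zip rb_ab.1 ra] | rb_ab <- zip T ra] | ra <- T].

Lemma ntriples_tableE bs c2 n : ntriples_table (sign_table bs c2 n) = ntriples bs c2 n true.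
Proof.
rewrite /ntriples_table /sign_table /ntriples.
rewrite (sum3_iota n (fun a b c =>
  [&& a != b, b != c, a != c & sq_triple bs c2 a b c == true] : nat)).
rewrite -map_comp; congr sumn; apply: eq_map => a /=.
rewrite zip_map -map_comp; congr sumn; apply: eq_map => b /=.
rewrite zip_map -map_comp; congr sumn; apply: eq_map => c /=.
by case: (eqVneq a b); case: (eqVneq b c); case: (eqVneq a c).
Qed.

Lemma balanced_table bs c2 n :
  balanced bs c2 n = (2 * ntriples_table (sign_table bs c2 n) == ndistinct n)%N.
Proof. by rewrite /balanced ntriples_tableE -(ntriples_sum bs c2) mul2n -addnn eqn_add2l. Qed.

Definition design_patterns : seq (seq bool) :=
  [:: [:: true; true; false; true; false; false]; [:: false; false; true; false; true; true];
      [:: true; true; false; false; false; true]; [:: false; false; true; true; true; false];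
      [:: true; false; true; true; false; false]; [:: false; true; false; false; true; true];
      [:: true; false; true; false; false; true]; [:: false; true; false; true; true; false]].

(* The [let] makes the evaluation share the count on 26 points. *)
Lemma balanced_patterns_eval b1 b2 b3 b4 b5 b6 c2 (bs := [:: b1; b2; b3; b4; b5; b6]) :
  let b26 := balanced bs c2 26 in (balanced bs c2 13 == b26) && (b26 == (bs \in design_patterns)).
Proof.
rewrite !balanced_table ndistinct13 ndistinct26.
by move: b1 b2 b3 b4 b5 b6 c2 @bs; do 7 case; vm_compute.
Qed.

Lemma balanced_patterns bs c2 : size bs = 6%N ->
  balanced bs c2 13 = balanced bs c2 26 /\ balanced bs c2 26 = (bs \in design_patterns).
Proof.
case: bs => [|b1 [|b2 [|b3 [|b4 [|b5 [|b6 []]]]]]] // _.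
by have /andP [/eqP -> /eqP ->] := balanced_patterns_eval b1 b2 b3 b4 b5 b6 c2.
Qed.

Section RootsOfUnity26.
Variables (F : finFieldType) (alpha : F).
Hypothesis F_mod52 : (#|F| %% 52 = 1)%N.
Hypothesis alpha_prim : (#|F|.-1).-primitive_root alpha.

Let m := (#|F|.-1 %/ 52)%N.

Lemma card_pred_52 : #|F|.-1 = (4 * m * 13)%N.
Proof. by have := finNzRing_gt1 F; rewrite /m; lia. Qed.

Lemma m_gt0 : (0 < m)%N.
Proof. by have := prim_order_gt0 alpha_prim; rewrite card_pred_52; lia. Qed.

Lemma card_odd : odd #|F|.
Proof. by rewrite -(odd_mod #|F| (_ : odd 52 = false)) // F_mod52. Qed.

Definition beta := alpha ^+ (#|F|.-1 %/ 13).

Lemma beta_prim : 13.-primitive_root beta.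
Proof.
have := exp_prim_root alpha_prim (4 * m).
by rewrite /beta card_pred_52 mulnK // gcdnMr mulKn // muln_gt0 m_gt0.
Qed.

Lemma alpha_half_neq1 : alpha ^+ (26 * m) != 1.
Proof.
have m0 := m_gt0; rewrite -(expr0 alpha) (eq_prim_root_expr alpha_prim) card_pred_52 mod0n.
by rewrite modn_small; lia.
Qed.

Lemma alpha_half : alpha ^+ (26 * m) = -1.
Proof.
have : (alpha ^+ (26 * m)) ^+ 2 == 1.
  rewrite -exprM -(prim_expr_order alpha_prim) card_pred_52.
  by rewrite (_ : 26 * m * 2 = 4 * m * 13)%N //; lia.
by rewrite sqrf_eq1 (negbTE alpha_half_neq1) => /eqP.
Qed.

Lemma nzsq_N1 : nzsq (-1 : F).
Proof. by rewrite -alpha_half nzsq_prim_root_exp ?card_odd // oddM. Qed.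

Lemma N1_neq1 : (-1 : F) != 1.
Proof. by rewrite -alpha_half alpha_half_neq1. Qed.

Lemma beta13 : beta ^+ 13 = 1.
Proof. exact: prim_expr_order beta_prim. Qed.

Definition root26 i : F := (-1) ^+ (i %/ 13) * beta ^+ (i %% 13).

Lemma root26_alpha i : root26 i = alpha ^+ (26 * m * (i %/ 13) + 4 * m * (i %% 13)).
Proof.
rewrite exprD (exprM alpha (26 * m)) (exprM alpha (4 * m)) alpha_half.
by rewrite /root26 /beta card_pred_52 mulnK.
Qed.

Lemma root26_neq0 i : root26 i != 0.
Proof. by rewrite root26_alpha expf_neq0 ?prim_root_neq0. Qed.

Lemma nzsq_root26 i : nzsq (root26 i).
Proof. by rewrite root26_alpha nzsq_prim_root_exp ?card_odd // oddD !oddM. Qed.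

Lemma root26_exp13 i : root26 i ^+ 13 = (-1) ^+ (i %/ 13)%N.
Proof.
rewrite /root26 exprMn (exprAC beta) beta13 expr1n mulr1 -exprM.
by rewrite -[LHS]signr_odd oddM andbT signr_odd.
Qed.

Lemma root26_inj i j : (i < 26)%N -> (j < 26)%N -> root26 i = root26 j -> i = j.
Proof.
move=> i26 j26 ij.
have e_eq : (i %/ 13 = j %/ 13)%N.
  have := root26_exp13 j; rewrite -ij root26_exp13.
  have i2 : (i %/ 13 < 2)%N by lia. have j2 : (j %/ 13 < 2)%N by lia.
  move: (i %/ 13)%N (j %/ 13)%N i2 j2 => [|[|k]] [|[|l]] // _ _ /eqP.
    by rewrite eq_sym (negbTE N1_neq1).
  by rewrite (negbTE N1_neq1).
move: ij; rewrite /root26 e_eq => /mulfI /eqP.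
rewrite expf_neq0 ?oppr_eq0 ?oner_eq0 // (eq_prim_root_expr beta_prim) !modn_mod => /(_ isT) /eqP.
lia.
Qed.

Lemma root26_eq i j : (i < 26)%N -> (j < 26)%N -> (root26 i == root26 j) = (i == j).
Proof. by move=> i26 j26; apply/eqP/eqP => [/(root26_inj i26 j26)|->]. Qed.

Lemma root26_small r : (r < 13)%N -> root26 r = beta ^+ r.
Proof. by move=> r13; rewrite /root26 divn_small // modn_small // expr0 mul1r. Qed.

Lemma root26_large r : (r < 13)%N -> root26 (13 + r) = - beta ^+ r.
Proof.
move=> r13; rewrite /root26 (_ : (13 + r) %/ 13 = 1)%N; last by lia.
by rewrite (_ : (13 + r) %% 13 = r)%N ?expr1 ?mulN1r //; lia.
Qed.

Lemma mu_sub13 : mu_sub F 13 = [set Some (root26 i) | i : 'I_13].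
Proof.
apply/setP => p; apply/imsetP/imsetP => [[x] | [i _ ->]].
  rewrite inE => /andP [_ /eqP /(prim_rootP beta_prim) [r ->]] ->.
  by exists r; rewrite ?root26_small.
by exists (root26 i); rewrite // inE root26_neq0 root26_exp13 divn_small ?expr0 ?eqxx.
Qed.

Lemma mu_sub26 : mu_sub F 26 = [set Some (root26 i) | i : 'I_26].
Proof.
apply/setP => p; apply/imsetP/imsetP => [[x] | [i _ ->]].
  rewrite inE => /andP [_ x26] ->.
  have : (x ^+ 13) ^+ 2 == 1 by rewrite -exprM.
  rewrite sqrf_eq1 => /orP [] /eqP x13.
    have [r ->] := prim_rootP beta_prim x13.
    by exists (widen_ord (isT : 13 <= 26)%N r); rewrite //= root26_small.
  have /(prim_rootP beta_prim) [r] : (- x) ^+ 13 = 1.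
    by rewrite exprNn x13 -signr_odd expr1 mulN1r opprK.
  move=> /(canRL opprK) ->; have r26 : (13 + r < 26)%N by rewrite -addnS leq_add2l.
  by exists (Ordinal r26); rewrite //= root26_large.
exists (root26 i); rewrite // inE root26_neq0 (exprM _ 13 2) root26_exp13 /=.
by rewrite -exprM mulnC exprM sqrrN expr1n expr1n.
Qed.

Definition beta_signs := [seq nzsq (1 - beta ^+ j) | j <- iota 1 6].
Definition two_sign := nzsq (1 + 1 : F).

Lemma one_sub_beta_neq0 k : (0 < k < 13)%N -> 1 - beta ^+ k != 0.
Proof.
move=> k13; rewrite subr_eq0 eq_sym -(expr0 beta) (eq_prim_root_expr beta_prim) mod0n.
by rewrite modn_small; lia.
Qed.

Lemma one_add_beta_neq0 k : 1 + beta ^+ k != 0.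
Proof.
rewrite addr_eq0 eq_sym eqr_oppLR; apply: contra_neq N1_neq1 => bk.
have : (beta ^+ k) ^+ 13 = 1 by rewrite exprAC beta13 expr1n.
by rewrite bk -signr_odd expr1.
Qed.

Lemma nzsq_one_sub_beta d : (0 < d < 13)%N -> nzsq (1 - beta ^+ d) = sq_one_sub beta_signs d.
Proof.
move=> d13; rewrite /sq_one_sub /beta_signs.
have nth_signs k : (k < 6)%N -> nth false [seq nzsq (1 - beta ^+ j) | j <- iota 1 6] k =
                                 nzsq (1 - beta ^+ k.+1).
  by move=> k6; rewrite (nth_map 0%N) ?size_iota // nth_iota.
case: ifP => d6; first by rewrite nth_signs ?prednK //; lia.
rewrite nth_signs ?prednK; try lia.
have d_d' : beta ^+ d * beta ^+ (13 - d) = 1 by rewrite -exprD subnKC ?beta13 //; lia.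
have -> : 1 - beta ^+ d = (- beta ^+ d) * (1 - beta ^+ (13 - d)).
  by rewrite mulrBr mulr1 mulNr d_d' opprK addrC.
rewrite nzsqM ?card_odd ?one_sub_beta_neq0 -?root26_large ?nzsq_root26 ?root26_neq0 //; lia.
Qed.

Lemma nzsq_one_sub_signed e d : (d < 13)%N -> odd e || (0 < d)%N ->
  nzsq (1 - (-1) ^+ e * beta ^+ d) = sq_one_sub_signed beta_signs two_sign e d.
Proof.
move=> d13; rewrite /sq_one_sub_signed -signr_odd; case: (odd e) => /= [_ | d0].
  rewrite expr1 mulN1r opprK; case: eqP => [->|/eqP d0]; first by rewrite expr0.
  have factor : 1 - beta ^+ (2 * d)%N = (1 - beta ^+ d) * (1 + beta ^+ d).
    by rewrite mulnC exprM; ring.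
  have d_pos : (0 < d < 13)%N by lia.
  have := congr1 (@nzsq F) factor.
  rewrite nzsqM ?card_odd ?one_sub_beta_neq0 ?one_add_beta_neq0 //.
  rewrite -(prim_expr_mod beta_prim) !nzsq_one_sub_beta //; last lia.
  by case: (nzsq _); case: sq_one_sub; case: sq_one_sub.
by rewrite expr0 mul1r nzsq_one_sub_beta //; lia.
Qed.

Lemma root26_sub_neq0 i j : (i < 26)%N -> (j < 26)%N -> i != j -> root26 i - root26 j != 0.
Proof. by move=> i26 j26; rewrite subr_eq0 root26_eq. Qed.

Lemma nzsq_root26_sub i j : (i < 26)%N -> (j < 26)%N -> i != j ->
  nzsq (root26 i - root26 j) = sq_diff beta_signs two_sign i j.
Proof.
move=> i26 j26 ij; rewrite /sq_diff.
set e := (i %/ 13 + j %/ 13)%N; set d := ((j %% 13 + 13 - i %% 13) %% 13)%N.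
have yj : root26 j = root26 i * ((-1) ^+ e * beta ^+ d).
  rewrite /root26 mulrACA -exprD -[in LHS]signr_odd -[in RHS]signr_odd oddD oddD addKb -exprD.
  by rewrite -(prim_expr_mod beta_prim) -[in RHS](prim_expr_mod beta_prim); congr (_ * _ ^+ _); lia.
have sub_yj : root26 i - root26 j = root26 i * (1 - (-1) ^+ e * beta ^+ d).
  by rewrite yj mulrBr mulr1.
have := root26_sub_neq0 i26 j26 ij; rewrite sub_yj mulf_eq0 negb_or => /andP [_ diff_neq0].
rewrite nzsqM ?card_odd ?root26_neq0 // nzsq_root26.
have e_or_d : odd e || (0 < d)%N.
  have [d0|] := posnP d; last by rewrite orbT.
  suff -> : e = 1%N by [].
  by move: d0; rewrite /e /d; lia.
by rewrite nzsq_one_sub_signed ?ltn_pmod //; case: sq_one_sub_signed.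
Qed.

Lemma tsign_root26 a b c : (a < 26)%N -> (b < 26)%N -> (c < 26)%N -> [&& a != b, b != c & a != c] ->
  tsign (Some (root26 a), Some (root26 b), Some (root26 c)) = sq_triple beta_signs two_sign a b c.
Proof.
move=> a26 b26 c26 /and3P [ab bc ac].
have ca : root26 c - root26 a = -1 * (root26 a - root26 c) by rewrite mulN1r opprB.
rewrite /tsign /triple_disc /bracket /= !mulr1 !mul1r ca.
rewrite !nzsqM ?card_odd ?mulf_neq0 ?root26_sub_neq0 ?oppr_eq0 ?oner_eq0 // nzsq_N1.
rewrite !nzsq_root26_sub // /sq_triple.
by case: (sq_diff _ _ a b); case: (sq_diff _ _ b c); case: (sq_diff _ _ a c).
Qed.

Lemma ntriples_in_root26 n t : (n <= 26)%N ->
  ntriples_in t [set Some (root26 i) | i : 'I_n] = ntriples beta_signs two_sign n t.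
Proof.
move=> n26; have lt26 (i : 'I_n) : (i < 26)%N := leq_trans (ltn_ord i) n26.
have root_inj : injective (fun i : 'I_n => root26 i).
  by move=> i j /(root26_inj (lt26 i) (lt26 j)) /val_inj.
pose pt3 (x : 'I_n * 'I_n * 'I_n) := (Some (root26 x.1.1), Some (root26 x.1.2), Some (root26 x.2)).
have pt3_inj : injective pt3.
  by move=> [[a b] c] [[a' b'] c'] [] /root_inj -> /root_inj -> /root_inj ->.
pose Q (x : 'I_n * 'I_n * 'I_n) := let: (a, b, c) := x in
  [&& a != b :> nat, b != c :> nat, a != c :> nat & sq_triple beta_signs two_sign a b c == t].
have pt3_triples x : (pt3 x \in triples_with F t) = Q x.
  case: x => [[a b] c]; rewrite inE /= !(inj_eq Some_inj) !(inj_eq root_inj).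
  rewrite -!(inj_eq (@ord_inj n)) /pt3 /=.
  case abc: [&& _, _ & _]; last by move: abc; do 3 case: (_ != _).
  by rewrite tsign_root26 ?lt26 //; move: abc; do 3 case: (_ != _).
transitivity #|pt3 @: [set x | Q x]|.
  apply: eq_card => -[[x y] z]; rewrite inE; apply/idP/imsetP => [/andP [p_in /and3P []] | [p]].
    move=> /imsetP [a _ xa] /imsetP [b _ yb] /imsetP [c _ zc]; subst x y z.
    by exists (a, b, c); rewrite // inE -pt3_triples.
  by rewrite inE -pt3_triples => p_in ->; rewrite p_in /=; apply/and3P; split; apply: imset_f.
rewrite card_imset // -sum1dep_card big_mkcond /ntriples pair_bigA pair_bigA /=.
by apply: eq_bigr => -[[a b] c].
Qed.

Lemma gives_3design_balanced n : n \in [:: 13; 26]%N ->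
  gives_3design F n <-> balanced beta_signs two_sign n.
Proof.
move=> n_13_26; have [n_gt2 n_le26 mu_n] :
    [/\ 2 < n, n <= 26 & mu_sub F n = [set Some (root26 i) | i : 'I_n]]%N.
  by move: n_13_26; rewrite !inE => /orP [] /eqP ->; rewrite ?mu_sub13 ?mu_sub26.
rewrite /gives_3design mu_n (starter3_balanced card_odd).
  by rewrite !ntriples_in_root26 // /balanced; split=> [->|/eqP].
have [n0 n1] : (0 < n)%N /\ (1 < n)%N by lia.
exists (Some (root26 (Ordinal n0)), Some (root26 (Ordinal n1)), Some (root26 (Ordinal n_gt2))).
apply/andP; split; last by apply/and3P; split; apply: imset_f.
by rewrite /= !(inj_eq Some_inj) !root26_eq.
Qed.

End RootsOfUnity26.

Theorem theorem5p1 (F : finFieldType) (alpha : F) :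
  (#|F| %% 52 = 1)%N ->
  (#|F|.-1).-primitive_root alpha ->
  let beta := alpha ^+ (#|F|.-1 %/ 13) in
  let s := [seq chi (1 - beta ^+ j) | j <- iota 1 6] in
  (gives_3design F 13 <-> gives_3design F 26) /\
  (gives_3design F 26 <->
     s \in [:: [:: 1; 1; -1; 1; -1; -1]; [:: -1; -1; 1; -1; 1; 1];
               [:: 1; 1; -1; -1; -1; 1]; [:: -1; -1; 1; 1; 1; -1];
               [:: 1; -1; 1; 1; -1; -1]; [:: -1; 1; -1; -1; 1; 1];
               [:: 1; -1; 1; -1; -1; 1]; [:: -1; 1; -1; 1; 1; -1]]).
Proof.
move=> F_mod52 alpha_prim beta s.
pose sign (b : bool) : int := if b then 1 else -1.
have sign_inj : injective sign by case; case.
have -> : s = map sign (beta_signs alpha) by rewrite /s -map_comp.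
rewrite (_ : [:: [:: 1; _; _; _; _; _]; _; _; _; _; _; _; _] = map (map sign) design_patterns) //.
rewrite (mem_map (inj_map sign_inj)).
rewrite !(gives_3design_balanced F_mod52 alpha_prim) //.
have signs6 : size (beta_signs alpha) = 6%N by rewrite size_map size_iota.
by have [-> ->] := balanced_patterns (two_sign F) signs6.
Qed.
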